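(* Let $M$ be a matroid of rank $r$ on a finite set $E$ and let $\mathcal X\subseteq 2^E$. Then $\mathcal X$ is complete with respect to $M$ if and only if there is an erection $N$ of $M$ such that \[ \mathcal X=\{X\subseteq E : r_N(X)\le r\}. \]
   Context: For a matroid $M$ of rank $r$ on $E$ with independent sets $\mathcal I$, its truncation is $T(M)=(E,\{I\in\mathcal I:|I|\le r-1\})$. A matroid $N$ on $E$ is an erection of $M$ if $T(N)=M$ or $N=M$. A set $X\subseteq E$ is $k$-closed in $M$ if $\mathrm{cl}_M(Y)\subseteq X$ for every $Y\subseteq X$ with $|Y|\le k$; the $k$-closure $\mathrm{cl}_k(X)$ is the intersection of all $k$-closed sets containing $X$. A collection $\mathcal X\subseteq 2^E$ is complete with respect to $M$ if: (i) for all $X\in\mathcal X$ and $Y\subseteq X$ we have $Y\in\mathcal X$; (ii) every basis of $M$ is in $\mathcal X$; (iii) for all $X\in\mathcal X$, $\mathrm{cl}_{r-1}(X)\in\mathcal X$; (iv) for all $X,Y\in\mathcal X$ with $r_M(X\cap Y)=r$, we have $X\cup Y\in\mathcal X$. *)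

(* A matroid on the finite ground set E is represented by a
   finType T (E = [set: T]) and its family of independent sets. *)
From mathcomp Require Import all_boot all_order all_algebra.
Set Implicit Arguments. Unset Strict Implicit. Unset Printing Implicit Defensive.
Import Order.TTheory GRing.Theory Num.Theory.

Section Matroid.
Variable T : finType.

Definition is_matroid (I : {set {set T}}) : Prop :=
  [/\ set0 \in I,
      (forall A B : {set T}, B \in I -> A \subset B -> A \in I) &
      (forall A B : {set T}, A \in I -> B \in I -> #|A| < #|B| ->
         exists2 x, x \in B :\: A & x |: A \in I)].

Definition mrank (I : {set {set T}}) (X : {set T}) : nat :=
  \max_(Y in I | Y \subset X) #|Y|.

Definition mrk (I : {set {set T}}) : nat := mrank I [set: T].

Definition is_basis (I : {set {set T}}) (B : {set T}) : bool :=
  (B \in I) && (#|B| == mrk I).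

Definition truncation (I : {set {set T}}) : {set {set T}} :=
  [set Y in I | ((#|Y|%:Z) <= (mrk I)%:Z - 1)%R].

Definition erection (N M : {set {set T}}) : Prop :=
  is_matroid N /\ (truncation N = M \/ N = M).

Definition mcl (I : {set {set T}}) (Y : {set T}) : {set T} :=
  [set x | mrank I (x |: Y) == mrank I Y].

(* X is k-closed (k an integer, since it is used with k = r - 1) *)
Definition kclosed (I : {set {set T}}) (k : int) (X : {set T}) : bool :=
  [forall Y : {set T}, ((Y \subset X) && ((#|Y|%:Z) <= k)%R) ==> (mcl I Y \subset X)].

Definition kcl (I : {set {set T}}) (k : int) (X : {set T}) : {set T} :=
  \bigcap_(Z | kclosed I k Z && (X \subset Z)) Z.

Definition complete (I : {set {set T}}) (XX : {set {set T}}) : Prop :=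
  [/\ (forall X Y : {set T}, X \in XX -> Y \subset X -> Y \in XX),
      (forall B : {set T}, is_basis I B -> B \in XX),
      (forall X : {set T}, X \in XX -> kcl I ((mrk I)%:Z - 1)%R X \in XX) &
      (forall X Y : {set T}, X \in XX -> Y \in XX ->
         mrank I (X :&: Y) = mrk I -> X :|: Y \in XX)].

End Matroid.

From mathcomp Require Import all_boot all_order all_algebra.
From mathcomp Require Import zify.
Set Implicit Arguments. Unset Strict Implicit. Unset Printing Implicit Defensive.

(* Let r = r(M). For an erection N of M, the sets of N-rank at most r are closed
   under the four operations: the N-closure of X has the N-rank of X and is
   (r-1)-closed in M, because M and N have the same rank on sets of size at most r,
   and the union axiom follows from submodularity of r_N since r_N >= r_M.
   Conversely, for a complete family X let N consist of M together with all
   (r+1)-sets outside X. Closure under (r-1)-closure forces every set outside X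
   to have M-rank r and every (r+1)-set outside X to have all its r-subsets
   independent; the union axiom lets one absorb into a basis A all points x with
   A + x in X. Hence a set lies outside X exactly when it contains a member of N
   of size r+1, and the exchange axiom for N follows. *)

Lemma setU_points_ind (T : finType) (P : {set T} -> Prop) (A S : {set T}) :
  P A -> (forall X Y, P (A :|: X) -> P (A :|: Y) -> P (A :|: (X :|: Y))) ->
  (forall x, x \in S -> P (x |: A)) -> P (A :|: S).
Proof.
move=> PA PU PS.
have -> : S = \bigcup_(x in S) [set x].
  apply/setP => y; apply/idP/bigcupP => [yS|[x xS]]; first by exists y; rewrite ?set11.
  by rewrite inE => /eqP ->.
apply: (big_ind (fun X => P (A :|: X))); rewrite ?setU0 //.
by move=> x xS; rewrite setUC; apply: PS.
Qed.

Section MatroidRank.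
Variables (T : finType) (I : {set {set T}}).
Implicit Types X Y J K : {set T}.

Lemma mrank_le_card X : mrank I X <= #|X|.
Proof. by apply/bigmax_leqP => Y /andP[_ sYX]; apply: subset_leq_card. Qed.

Lemma indep_le_mrank X J : J \in I -> J \subset X -> #|J| <= mrank I X.
Proof. by move=> JI sJX; apply: leq_bigmax_cond; rewrite JI. Qed.

Lemma mrankS X Y : X \subset Y -> mrank I X <= mrank I Y.
Proof.
move=> sXY; apply/bigmax_leqP => J /andP[JI sJX].
exact: indep_le_mrank JI (subset_trans sJX sXY).
Qed.

Lemma mrank_le_mrk X : mrank I X <= mrk I.
Proof. exact: mrankS (subsetT X). Qed.

Lemma indep_le_mrk J : J \in I -> #|J| <= mrk I.
Proof. by move=> JI; apply: indep_le_mrank JI (subsetT J). Qed.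

Lemma mrank_indep J : J \in I -> mrank I J = #|J|.
Proof. by move=> JI; apply/eqP; rewrite eqn_leq mrank_le_card indep_le_mrank. Qed.

Lemma is_basis_card J : J \in I -> #|J| = mrk I -> is_basis I J.
Proof. by move=> JI cJ; rewrite /is_basis JI cJ eqxx. Qed.

Lemma subset_mcl X : X \subset mcl I X.
Proof. by apply/subsetP => x xX; rewrite inE (setUidPr _) // sub1set. Qed.

Lemma mcl_of_mrank X Y : Y \subset X -> mrank I X <= mrank I Y -> X \subset mcl I Y.
Proof.
move=> sYX rXY; apply/subsetP => x xX; rewrite inE eqn_leq [X in _ && X]mrankS ?subsetUr // andbT.
by apply: leq_trans rXY; apply: mrankS; rewrite subUset sub1set xX.
Qed.

Hypothesis mI : is_matroid I.

Lemma mrank_witness X : exists2 J, (J \in I) && (J \subset X) & #|J| = mrank I X.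
Proof.
have [I0 _ _] := mI.
have [|J JX eJ] := @eq_bigmax_cond _ [pred J | (J \in I) && (J \subset X)] (fun J => #|J|).
  by apply/card_gt0P; exists set0; rewrite inE I0 sub0set.
by exists J; rewrite // /mrank eJ.
Qed.

Lemma indep_of_mrank J : #|J| <= mrank I J -> J \in I.
Proof.
move=> rJ; have [K /andP[KI sKJ] eK] := mrank_witness J.
suff -> : J = K by [].
by apply/eqP; rewrite eq_sym eqEcard sKJ eK.
Qed.

Lemma extend_indep X J : J \in I -> J \subset X ->
  exists K, [/\ K \in I, J \subset K, K \subset X & #|K| = mrank I X].
Proof.
move=> JI sJX; have [_ _ exI] := mI.
pose P K := [&& K \in I, J \subset K & K \subset X].
have PJ : P J by rewrite /P JI subxx sJX.
case: (arg_maxnP (fun K => #|K|) PJ) => K /and3P[KI sJK sKX] Kmax.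
exists K; split=> //; apply/eqP; rewrite eqn_leq indep_le_mrank //=.
rewrite leqNgt; apply/negP => ltK.
have [L /andP[LI sLX] eL] := mrank_witness X.
have [x] := exI K L KI LI (leq_trans ltK (eq_leq (esym eL))).
rewrite inE => /andP[xK xL] xKI.
have PxK : P (x |: K).
  by rewrite /P xKI (subset_trans sJK (subsetUr _ _)) subUset sub1set (subsetP sLX) // sKX.
by move: (Kmax _ PxK); rewrite /= cardsU1 xK add1n ltnn.
Qed.

Lemma mrank_submod X Y : mrank I (X :|: Y) + mrank I (X :&: Y) <= mrank I X + mrank I Y.
Proof.
have [_ dI _] := mI.
have [J /andP[JI sJ] eJ] := mrank_witness (X :&: Y).
have sIU : X :&: Y \subset X :|: Y by apply: subset_trans (subsetIl X Y) (subsetUl X Y).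
have [K [KI sJK sKU eK]] := extend_indep JI (subset_trans sJ sIU).
have rKX : #|K :&: X| <= mrank I X.
  by apply: indep_le_mrank (subsetIr _ _); exact: dI _ _ KI (subsetIl _ _).
have rKY : #|K :&: Y| <= mrank I Y.
  by apply: indep_le_mrank (subsetIr _ _); exact: dI _ _ KI (subsetIl _ _).
have := cardsUI (K :&: X) (K :&: Y); rewrite -setIUr (setIidPl sKU).
have : #|J| <= #|(K :&: X) :&: (K :&: Y)|.
  by apply: subset_leq_card; rewrite setIACA setIid subsetI sJK.
lia.
Qed.

Lemma mrank_setU_le X Y : mrank I Y <= mrank I (X :&: Y) -> mrank I (X :|: Y) <= mrank I X.
Proof. by have := mrank_submod X Y; lia. Qed.

Lemma mrank_mcl X : mrank I (mcl I X) = mrank I X.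
Proof.
apply/eqP; rewrite eqn_leq [X in _ && X]mrankS ?subset_mcl // andbT.
rewrite -(setUidPr (subset_mcl X)).
apply: (setU_points_ind (P := fun Z => mrank I Z <= mrank I X)) => // [Y Z rY rZ|x].
  rewrite setUUr; apply: leq_trans (mrank_setU_le _) rY.
  by apply: leq_trans rZ (mrankS _); rewrite subsetI !subsetUl.
by rewrite inE => /eqP ->.
Qed.

Lemma mcl_subset X Y : Y \subset mcl I X -> mcl I Y \subset mcl I X.
Proof.
move=> sYF; apply/subsetP => x; rewrite !inE => /eqP rxY.
rewrite eqn_leq [X in _ && X]mrankS ?subsetUr // andbT -(mrank_mcl X).
have sxF : x |: X \subset mcl I X :|: (x |: Y).
  by rewrite subUset sub1set in_setU in_setU1 eqxx orbT (subset_trans (subset_mcl X)) ?subsetUl.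
apply: leq_trans (mrankS sxF) (mrank_setU_le _).
by rewrite rxY mrankS // subsetI sYF subsetUr.
Qed.

End MatroidRank.

Lemma sub_kcl (T : finType) (I : {set {set T}}) k (X : {set T}) : X \subset kcl I k X.
Proof. by apply/subsetP => x xX; apply/bigcapP => Z /andP[_ /subsetP]; apply. Qed.

Lemma mcl_sub_kcl (T : finType) (I : {set {set T}}) k (X Y : {set T}) :
  Y \subset X -> (#|Y|%:Z <= k)%R -> mcl I Y \subset kcl I k X.
Proof.
move=> sYX rY; apply/subsetP => x xY; apply/bigcapP => Z /andP[/forallP/(_ Y) kZ sXZ].
by move: kZ; rewrite (subset_trans sYX sXZ) rY => /subsetP; apply.
Qed.

Lemma kcl_sub_kclosed (T : finType) (I : {set {set T}}) k (X Z : {set T}) :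
  kclosed I k Z -> X \subset Z -> kcl I k X \subset Z.
Proof. by move=> kZ sXZ; apply: bigcap_inf; rewrite kZ sXZ. Qed.

Lemma lez_natB1 (m n : nat) : (m%:Z <= n%:Z - 1)%R = (m < n).
Proof. by apply/idP/idP; lia. Qed.

Lemma mrank_subfamily (T : finType) (M N : {set {set T}}) (X : {set T}) :
  M \subset N -> mrank M X <= mrank N X.
Proof.
move=> sMN; apply/bigmax_leqP => Y /andP[YM sYX].
exact: indep_le_mrank (subsetP sMN Y YM) sYX.
Qed.

Section Truncation.
Variables (T : finType) (N : {set {set T}}).
Implicit Types X Y Z : {set T}.

Lemma truncationE : truncation N = [set Y in N | #|Y| < mrk N].
Proof. by apply/setP => Y; rewrite !inE lez_natB1. Qed.

Lemma truncation_sub : truncation N \subset N.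
Proof. by apply/subsetP => Y; rewrite truncationE inE => /andP[]. Qed.

Hypothesis mN : is_matroid N.

Lemma mrank_truncation Z : #|Z| < mrk N -> mrank (truncation N) Z = mrank N Z.
Proof.
move=> rZ; apply/eqP; rewrite eqn_leq mrank_subfamily ?truncation_sub //=.
have [J /andP[JN sJZ] <-] := mrank_witness mN Z.
apply: (indep_le_mrank _ sJZ); rewrite truncationE inE JN.
exact: leq_ltn_trans (subset_leq_card sJZ) rZ.
Qed.

Lemma mrk_truncation : 0 < mrk N -> mrk N = (mrk (truncation N)).+1.
Proof.
move=> rN; have [_ dN _] := mN.
have [K /andP[KN _] eK] := mrank_witness mN [set: T]; rewrite -/(mrk N) in eK.
have [k kK] : exists k, k \in K by apply/card_gt0P; rewrite eK.
have cKk := cardsD1 k K; rewrite kK add1n in cKk.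
have Kk : K :\ k \in truncation N.
  by rewrite truncationE inE (dN _ _ KN (subsetDl _ _)); lia.
have : #|K :\ k| <= mrk (truncation N) := indep_le_mrank Kk (subsetT _).
have : mrk (truncation N) <= (mrk N).-1.
  by apply/bigmax_leqP => Y /andP[]; rewrite truncationE inE => /andP[_ rY] _; lia.
lia.
Qed.

Lemma mcl_truncation Y : #|Y|.+1 < mrk N -> mcl (truncation N) Y = mcl N Y.
Proof.
move=> rY; apply/setP => x; rewrite !inE !mrank_truncation //; first lia.
by apply: leq_ltn_trans rY; rewrite cardsU1; case: (_ \notin _).
Qed.

Lemma kclosed_mcl_truncation X : 0 < mrk N ->
  kclosed (truncation N) ((mrk (truncation N))%:Z - 1) (mcl N X).
Proof.
move=> rN; apply/forallP => Y; apply/implyP => /andP[sYF]; rewrite lez_natB1 => rY.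
rewrite mcl_truncation; first exact: mcl_subset.
by rewrite (mrk_truncation rN).
Qed.

End Truncation.

Lemma erection_complete (T : finType) (N M : {set {set T}}) :
  is_matroid M -> erection N M -> complete M [set X | mrank N X <= mrk M].
Proof.
move=> mM [mN [tN|<-]]; last by split=> *; rewrite inE mrank_le_mrk.
subst M; have [M0 _ _] := mM.
have rN : 0 < mrk N by move: M0; rewrite truncationE inE cards0 => /andP[].
split=> [X Y|B /andP[_ /eqP <-]|X|X Y]; rewrite !inE.
- by move=> rX sYX; apply: leq_trans rX; apply: mrankS.
- exact: mrank_le_card.
- move=> rX; rewrite -(mrank_mcl mN) in rX; apply: leq_trans rX; apply: mrankS.
  exact: kcl_sub_kclosed (kclosed_mcl_truncation mN X rN) (subset_mcl N X).
- move=> rX rY rXY; have := mrank_submod mN X Y.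
  have := mrank_subfamily (X :&: Y) (truncation_sub N); lia.
Qed.

Section CompleteErection.
Variables (T : finType) (M XX : {set {set T}}).
Hypotheses (mM : is_matroid M) (cX : complete M XX).
Implicit Types A B J W X Y Z : {set T}.
Local Notation r := (mrk M).

Lemma complete_sub X Y : X \in XX -> Y \subset X -> Y \in XX.
Proof. by case: cX => cD _ _ _; apply: cD. Qed.

Lemma indep_in_complete J : J \in M -> J \in XX.
Proof.
move=> JM; have [_ cB _ _] := cX.
have [K [KM sJK _ eK]] := extend_indep mM JM (subsetT J).
exact/(complete_sub _ sJK)/cB/is_basis_card.
Qed.

Lemma complete_setU_mcl X Y : X \in XX -> Y \subset X -> #|Y| < r -> X :|: mcl M Y \in XX.
Proof.
move=> XX' sYX rY; have [_ _ cK _] := cX.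
by apply: complete_sub (cK _ XX') _; rewrite subUset sub_kcl mcl_sub_kcl ?lez_natB1.
Qed.

Lemma mrank_notin_complete X : X \notin XX -> mrank M X = r.
Proof.
move=> XnX; apply/eqP; rewrite eqn_leq mrank_le_mrk leqNgt; apply: contra XnX => rX.
have [J /andP[JM sJX] eJ] := mrank_witness mM X.
apply: complete_sub (complete_setU_mcl (indep_in_complete JM) (subxx J) _) _; first by rewrite eJ.
have sXJ : X \subset mcl M J by apply: mcl_of_mrank sJX _; rewrite (mrank_indep JM) eJ.
exact: subset_trans sXJ (subsetUr _ _).
Qed.

Lemma small_in_complete W : #|W| <= r -> W \in XX.
Proof.
move=> cW; case WX: (W \in XX) => //; rewrite -WX.
apply/indep_in_complete/(indep_of_mrank mM).
by rewrite (mrank_notin_complete (negbT WX)).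
Qed.

Lemma notin_complete_minus Z z : Z \notin XX -> #|Z| = r.+1 -> z \in Z -> Z :\ z \in M.
Proof.
move=> + cZ zZ; apply: contraNT => Zz.
have [J /andP[JM sJ] eJ] := mrank_witness mM (Z :\ z).
have [e] : exists e, e \in (Z :\ z) :\: J.
  apply/set0Pn; apply: contra Zz; rewrite setD_eq0 => sZJ.
  by rewrite (_ : Z :\ z = J) //; apply/eqP; rewrite eqEsubset sZJ sJ.
rewrite inE => /andP[eJ' eZz]; have eZ : e \in Z by case/setD1P: eZz.
have := cardsD1 z Z; have := cardsD1 e Z; have := cardsD1 e (Z :\ z).
rewrite zZ eZ eZz !add1n => cZze cZe cZz.
have sZe : (Z :\ z) :\ e \subset Z :\ e by apply: setSD; apply: subsetDl.
apply: complete_sub (complete_setU_mcl (small_in_complete _) sZe _) _; try lia.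
rewrite -{1}(setD1K eZ) subUset subsetUl andbT sub1set in_setU; apply/orP; right.
(* [e] is spanned by [(Z :\ z) :\ e], which still contains the maximal
   independent subset [J] of [Z :\ z]. *)
apply: (subsetP (mcl_of_mrank (subsetDl _ _) _)) eZz.
by rewrite -eJ; apply: indep_le_mrank JM _; rewrite subsetD1 sJ eJ'.
Qed.

Lemma basis_setU1_notin A X : is_basis M A -> X \notin XX ->
  exists2 x, x \in X :\: A & x |: A \notin XX.
Proof.
case/andP=> AM /eqP cA XnX; apply/exists_inP; apply: contraNT XnX => /exists_inPn AxX.
have [_ _ _ cU] := cX.
have sXA : X \subset A :|: (X :\: A).
  by apply/subsetP => y yX; rewrite !inE yX andbT orbN.
apply: complete_sub sXA; apply: (setU_points_ind (P := fun Y => Y \in XX)).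
- exact: indep_in_complete.
- move=> S1 S2 S1X S2X; rewrite setUUr; apply: cU => //.
  apply/eqP; rewrite eqn_leq mrank_le_mrk -cA -(mrank_indep AM) mrankS //.
  by rewrite subsetI !subsetUl.
- by move=> x /AxX /negPn.
Qed.

Definition erect : {set {set T}} := M :|: [set Z : {set T} | (#|Z| == r.+1) && (Z \notin XX)].

Lemma in_erect Y : (Y \in erect) = (Y \in M) || (#|Y| == r.+1) && (Y \notin XX).
Proof. by rewrite !inE. Qed.

Lemma card_erect Y : Y \in erect -> #|Y| <= r.+1.
Proof. by rewrite in_erect => /orP[/indep_le_mrk|/andP[/eqP -> _]] //; apply: leqW. Qed.

Lemma erect_small Y : Y \in erect -> #|Y| <= r -> Y \in M.
Proof. by rewrite in_erect => /orP[//|/andP[/eqP -> _]]; rewrite ltnn. Qed.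

Lemma erect_complete Y : Y \in erect -> Y \in XX -> Y \in M.
Proof. by rewrite in_erect => /orP[//|/andP[_ /negPf ->]]. Qed.

Lemma erect_subset A B : B \in erect -> A \subset B -> A \in erect.
Proof.
have [_ dM _] := mM; rewrite !in_erect => /orP[BM sAB|/andP[/eqP cB BnX] sAB].
  by rewrite (dM _ _ BM sAB).
have [-> | AB] := eqVneq A B; first by rewrite cB eqxx BnX orbT.
have /properP[_ [b bB bA]] : A \proper B by rewrite properEneq AB.
by rewrite (dM _ _ (notin_complete_minus BnX cB bB)) // subsetD1 sAB bA.
Qed.

Lemma erect_exchange A B : A \in erect -> B \in erect -> #|A| < #|B| ->
  exists2 x, x \in B :\: A & x |: A \in erect.
Proof.
have [_ _ eM] := mM; move=> AN BN ltAB.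
have AM : A \in M by apply: erect_small AN _; have := card_erect BN; lia.
move: (BN); rewrite in_erect => /orP[BM|/andP[/eqP cB BnX]].
  by have [x xBA xA] := eM A B AM BM ltAB; exists x; rewrite // in_erect xA.
have [ltA|geA] := ltnP #|A| r.
  have [b bB] : exists b, b \in B by apply/card_gt0P; rewrite cB.
  have ltA' : #|A| < #|B :\ b| by have := cardsD1 b B; rewrite bB cB add1n; lia.
  have [x] := eM A _ AM (notin_complete_minus BnX cB bB) ltA'.
  rewrite !inE => /andP[xA /andP[_ xB]] xAM.
  by exists x; [rewrite inE xA xB | rewrite in_erect xAM].
have cA : #|A| = r by have := indep_le_mrk AM; lia.
have [x xBA xAnX] := basis_setU1_notin (is_basis_card AM cA) BnX.
exists x => //; rewrite in_erect xAnX cardsU1 cA; case/setDP: xBA => _ ->.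
by rewrite eqxx orbT.
Qed.

Lemma erect_matroid : is_matroid erect.
Proof.
have [M0 _ _] := mM.
by split; [rewrite in_erect M0 | exact: erect_subset | exact: erect_exchange].
Qed.

Lemma mrank_erect_le X : X \in XX -> mrank erect X <= r.
Proof.
move=> XX'; apply/bigmax_leqP => Y /andP[YN sYX].
exact/indep_le_mrk/(erect_complete YN)/(complete_sub XX' sYX).
Qed.

Lemma mrank_erect_gt X : X \notin XX -> r < mrank erect X.
Proof.
move=> XnX; have [J /andP[JM sJX] eJ] := mrank_witness mM X.
have cJ : #|J| = r by rewrite eJ mrank_notin_complete.
have [x] := basis_setU1_notin (is_basis_card JM cJ) XnX.
case/setDP=> xX xJ xJnX.
have xJN : x |: J \in erect by rewrite in_erect cardsU1 xJ cJ eqxx xJnX orbT.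
have := indep_le_mrank xJN (_ : x |: J \subset X); rewrite cardsU1 xJ cJ; apply.
by rewrite subUset sub1set xX.
Qed.

Lemma erection_erect : erection erect M.
Proof.
split; first exact: erect_matroid.
have [TX|TnX] := boolP ([set: T] \in XX).
  by right; apply/setP => Y; rewrite in_erect (complete_sub TX (subsetT Y)) andbF orbF.
have rN : mrk erect = r.+1.
  apply/eqP; rewrite eqn_leq mrank_erect_gt // andbT.
  by apply/bigmax_leqP => Y /andP[/card_erect].
left; apply/setP => Y; rewrite truncationE inE rN ltnS.
apply/andP/idP => [[YN /(erect_small YN)] //|YM].
by rewrite in_erect YM indep_le_mrk.
Qed.

Lemma complete_erectE : XX = [set X | mrank erect X <= r].
Proof.
apply/setP => X; rewrite inE; have [XX'|XnX] := boolP (X \in XX).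
  by rewrite mrank_erect_le.
by rewrite leqNgt mrank_erect_gt.
Qed.

End CompleteErection.

Theorem lemma3p3 (T : finType) (M : {set {set T}}) (XX : {set {set T}}) :
  is_matroid M ->
  (complete M XX <->
   exists N : {set {set T}},
     erection N M /\ XX = [set X : {set T} | mrank N X <= mrk M]).
Proof.
move=> mM; split=> [cX|[N [eN ->]]]; last exact: erection_complete.
by exists (erect M XX); split; [exact: erection_erect | exact: complete_erectE].
Qed.
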